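(* Let $r\in[0,\tfrac12]$. For every family of projective measurements $\{M_{a|x}\}_{a,x}$ on Alice's qubit, the assemblage generated from the Werner state $\omega_r$ by this family admits an LHS model of size $N(r)$ (whenever $N(r)<\infty$). Moreover, $\gamma(\omega_r)\ge N(r)$.
   Context: Notation: $\vec\sigma=(\sigma_x,\sigma_y,\sigma_z)$ is the vector of Pauli matrices, $\mathbb{I}$ the identity. A qubit POVM is a finite family $\{\Pi_i\}_{i=1}^n$ of positive semidefinite $2\times2$ operators summing to $\mathbb{I}$ (an ''$n$-outcome POVM''). A POVM $\{\Pi_i\}_{i=1}^n$ simulates a family of POVMs $\{M_{a|x}\}_{a,x}$ if there exist numbers $p(a|x,i)\ge0$ with $\sum_a p(a|x,i)=1$ such that $M_{a|x}=\sum_{i=1}^n p(a|x,i)\Pi_i$ for all $a,x$. For $r\in[0,1]$, $\mathcal{P}_r$ is the family of all two-outcome POVMs $\{M_{+|r\hat n},M_{-|r\hat n}\}$, $M_{\pm|r\hat n}=\tfrac12(\mathbb{I}\pm r\,\hat n\cdot\vec\sigma)$, over all unit vectors $\hat n\in\mathbb{R}^3$. $N(r)$ is the smallest $n$ such that some $n$-outcome qubit POVM simulates $\mathcal{P}_r$ ($N(r)=+\infty$ if none exists). The two-qubit Werner state is $\omega_r=r|\Psi^-\rangle\langle\Psi^-|+(1-r)\mathbb{I}\otimes\mathbb{I}/4$ with $|\Psi^-\rangle=(|01\rangle-|10\rangle)/\sqrt2$. Given a bipartite state $\rho_{AB}$ and a family of POVMs $\{M_{a|x}\}$ on $A$ (arbitrary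 input set, finitely many outcomes each), the generated assemblage is $\sigma_{a|x}=\mathrm{Tr}_A[(M_{a|x}\otimes\mathbb{I})\rho_{AB}]$. An LHS model of size $n$ for it consists of a probability distribution $p(i)$ on $\{1,\dots,n\}$, states $\rho_i$ on $B$, and conditional probabilities $p(a|x,i)$ with $\sigma_{a|x}=\sum_{i=1}^n p(a|x,i)p(i)\rho_i$ for all $a,x$. $\gamma(\rho_{AB})\in\{1,2,\dots\}\cup\{+\infty\}$ is the smallest $n$ such that every assemblage generated from $\rho_{AB}$ by any family of POVMs on $A$ admits an LHS model of size $n$. *)

From HB Require Import structures.
From mathcomp Require Import all_boot all_order all_algebra.
From mathcomp Require Import boolp reals.
From mathcomp Require Import complex mxtens.
Set Implicit Arguments. Unset Strict Implicit. Unset Printing Implicit Defensive.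
Import Order.TTheory GRing.Theory Num.Theory.
Local Open Scope ring_scope.

Section QDefs.
Variable R : realType.
Local Notation C := (R[i]).
Local Open Scope complex_scope.

Definition adjmx {m n} (A : 'M[C]_(m, n)) : 'M[C]_(n, m) := (map_mx conjc A)^T.

(* positive semidefinite: <v, A v> >= 0 for every v (order of C: real and >= 0) *)
Definition psd {n} (A : 'M[C]_n) : Prop :=
  forall v : 'cV[C]_n, 0 <= (adjmx v *m A *m v) 0 0.

Definition is_state {n} (rho : 'M[C]_n) : Prop := psd rho /\ \tr rho = 1.

Definition is_povm {k} (M : 'I_k -> 'M[C]_2) : Prop :=
  (forall a, psd (M a)) /\ \sum_(a < k) M a = 1%:M.

Definition is_projective {k} (M : 'I_k -> 'M[C]_2) : Prop :=
  is_povm M /\ (forall a, adjmx (M a) = M a /\ M a *m M a = M a).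

Definition povm_family (X : Type) (k : X -> nat) :=
  forall x : X, 'I_(k x) -> 'M[C]_2.

Definition simulates n (Pi : 'I_n -> 'M[C]_2) (X : Type) (k : X -> nat)
  (M : povm_family k) : Prop :=
  exists p : forall x : X, 'I_(k x) -> 'I_n -> R,
    (forall x a i, 0 <= p x a i) /\
    (forall x i, \sum_(a < k x) p x a i = 1) /\
    (forall x a, M x a = \sum_(i < n) (p x a i)%:C *: Pi i).

Definition sigx : 'M[C]_2 := \matrix_(i, j) (if i == j then 0 else 1).
Definition sigy : 'M[C]_2 :=
  \matrix_(i, j) (if i == j then 0 else if (i : nat) == 0%N then - 'i else 'i).
Definition sigz : 'M[C]_2 :=
  \matrix_(i, j) (if i == j then (if (i : nat) == 0%N then 1 else -1) else 0).

Definition unit_vec := {v : 'rV[R]_3 | \sum_(j < 3) v 0 j ^+ 2 == 1}.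

Definition ndotsigma (v : 'rV[R]_3) : 'M[C]_2 :=
  (v 0 0)%:C *: sigx + (v 0 1)%:C *: sigy + (v 0 2)%:C *: sigz.

(* the family P_r: outcome 0 is "+", outcome 1 is "-" *)
Definition Pr_family (r : R) : povm_family (fun _ : unit_vec => 2%N) :=
  fun v a => (2%:R)^-1 *: (1%:M + (if a == ord0 then 1 else -1) *:
                                   ((r%:C) *: ndotsigma (val v))).

Definition simulable (r : R) (n : nat) : Prop :=
  exists Pi : 'I_n -> 'M[C]_2, is_povm Pi /\ simulates Pi (Pr_family r).

(* smallest n satisfying P, or None (= +oo) if there is none *)
Definition min_opt (P : nat -> Prop) : option nat :=
  match pselect (exists n, `[< P n >]) with
  | left h => Some (ex_minn h)
  | right _ => None
  end.

Definition ole (a b : option nat) : Prop :=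
  match a, b with
  | _, None => True
  | None, Some _ => False
  | Some m, Some n => (m <= n)%N
  end.

Definition Nr (r : R) : option nat := min_opt (simulable r).

(* two-qubit systems: index of |a b> is mxtens_index (a, b) *)
Definition ket (b : 'I_2) : 'cV[C]_2 := delta_mx b 0.
Definition psi_minus : 'cV[C]_(2 * 2) :=
  ((Num.sqrt (2 : R))^-1)%:C *: (ket 0 *t ket 1 - ket 1 *t ket 0).
Definition werner (r : R) : 'M[C]_(2 * 2) :=
  r%:C *: (psi_minus *m adjmx psi_minus) + ((1 - r) / 4)%:C *: 1%:M.

(* partial trace over Alice (first factor) *)
Definition ptraceA (X : 'M[C]_(2 * 2)) : 'M[C]_2 :=
  \matrix_(b, b') \sum_(a < 2) X (mxtens_index (a, b)) (mxtens_index (a, b')).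

Definition assemblage (rho : 'M[C]_(2 * 2)) (X : Type) (k : X -> nat)
  (M : povm_family k) : forall x : X, 'I_(k x) -> 'M[C]_2 :=
  fun x a => ptraceA ((M x a *t (1%:M : 'M[C]_2)) *m rho).

Definition has_LHS_model (X : Type) (k : X -> nat)
  (sigma : forall x : X, 'I_(k x) -> 'M[C]_2) (n : nat) : Prop :=
  exists (p : 'I_n -> R) (rhos : 'I_n -> 'M[C]_2)
         (q : forall x : X, 'I_(k x) -> 'I_n -> R),
    (forall i, 0 <= p i) /\ \sum_(i < n) p i = 1 /\
    (forall i, is_state (rhos i)) /\
    (forall x a i, 0 <= q x a i) /\
    (forall x i, \sum_(a < k x) q x a i = 1) /\
    (forall x a, sigma x a = \sum_(i < n) (q x a i * p i)%:C *: rhos i).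

Definition all_LHS (rho : 'M[C]_(2 * 2)) (n : nat) : Prop :=
  forall (X : Type) (k : X -> nat) (M : povm_family k),
    (forall x, is_povm (M x)) -> has_LHS_model (assemblage rho M) n.

Definition gamma (rho : 'M[C]_(2 * 2)) : option nat := min_opt (all_LHS rho).

End QDefs.

From HB Require Import structures.
From mathcomp Require Import all_boot all_order all_algebra.
From mathcomp Require Import boolp reals.
From mathcomp Require Import complex mxtens.
From mathcomp Require Import ring lra.
Import Order.TTheory GRing.Theory Num.Theory.
Set Implicit Arguments. Unset Strict Implicit. Unset Printing Implicit Defensive.
Local Open Scope ring_scope.

(* Steering the Werner state with an element E of Alice leaves Bob with
   ((1 + r) / 4) (tr E) 1 - (r / 2) E.  The elements of a projective qubit measurement all
   have the form e 1 + c n.sigma with |c| <= e for one common unit vector n, and such an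
   element steers to ((e - c) / 2) 1 + c M_{-|rn}.  So if a POVM {Pi_i} simulates P_r with
   response p, the assemblage is sum_i q(a|x,i) (tr Pi_i / 2) (Pi_i / tr Pi_i) with
   q = e - c + 2 c p(-|n,i), a convex combination of e - c and e + c.  Conversely the sharp
   measurements M_{+-|n} steer the Werner state to (1/2) M_{-+|rn}, so an LHS model of size m
   of that assemblage gives the m-outcome POVM Pi_i = 2 p(i) rho_i simulating P_r. *)

Lemma ord2_cases (i : 'I_2) : i = 0 \/ i = 1.
Proof. by case: i => [[|[|]]] //= ?; [left|right]; apply/val_inj. Qed.

Lemma big_ord2 (V : nmodType) (F : 'I_2 -> V) : \sum_(i < 2) F i = F 0 + F 1.
Proof. by rewrite !big_ord_recr big_ord0 /= add0r; congr (F _ + F _); apply/val_inj. Qed.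

Lemma big_ord3 (V : nmodType) (F : 'I_3 -> V) : \sum_(i < 3) F i = F 0 + F 1 + F 2.
Proof.
by rewrite !big_ord_recr big_ord0 /= add0r; congr (F _ + F _ + F _); apply/val_inj.
Qed.

Lemma sum_mxtens_index (V : nmodType) m n (F : 'I_(m * n) -> V) :
  \sum_k F k = \sum_(i < m) \sum_(j < n) F (mxtens_index (i, j)).
Proof.
rewrite pair_big /= (reindex (@mxtens_unindex m n)) /=.
  by apply: eq_bigr => k _; rewrite mxtens_unindexK.
by exists (@mxtens_index m n) => k _; rewrite (mxtens_indexK, mxtens_unindexK).
Qed.

Lemma dep_choice (X : Type) (Y : X -> Type) (P : forall x, Y x -> Prop) :
  (forall x, exists y, P x y) -> exists f : forall x, Y x, forall x, P x (f x).
Proof. by move=> h; exists (fun x => sval (cid (h x))) => x; exact: svalP (cid (h x)). Qed.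

Section Matrix2.
Variable T : pzRingType.

Definition mx2 (a b c d : T) : 'M[T]_2 :=
  \matrix_(i, j) if i == 0 then (if j == 0 then a else b) else (if j == 0 then c else d).

Lemma mx2_eta (A : 'M[T]_2) : A = mx2 (A 0 0) (A 0 1) (A 1 0) (A 1 1).
Proof.
by apply/matrixP => i j; rewrite mxE; case: (ord2_cases i) => ->; case: (ord2_cases j) => ->.
Qed.

Lemma mx2_inj a b c d a' b' c' d' : mx2 a b c d = mx2 a' b' c' d' ->
  [/\ a = a', b = b', c = c' & d = d'].
Proof.
move=> /(congr1 (fun A : 'M_2 => (A 0 0, A 0 1, A 1 0, A 1 1))).
by rewrite /= !mxE => -[-> -> -> ->].
Qed.

Lemma mx2D a b c d a' b' c' d' :
  mx2 a b c d + mx2 a' b' c' d' = mx2 (a + a') (b + b') (c + c') (d + d').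
Proof. by apply/matrixP => i j; rewrite !mxE; case: (i == 0); case: (j == 0). Qed.

Lemma mx2Z (x : T) a b c d : x *: mx2 a b c d = mx2 (x * a) (x * b) (x * c) (x * d).
Proof. by apply/matrixP => i j; rewrite !mxE; case: (i == 0); case: (j == 0). Qed.

Lemma mx2_mul a b c d a' b' c' d' : mx2 a b c d *m mx2 a' b' c' d' =
  mx2 (a * a' + b * c') (a * b' + b * d') (c * a' + d * c') (c * b' + d * d').
Proof.
apply/matrixP => i j; rewrite !mxE big_ord2 !mxE /=.
by case: (ord2_cases i) => ->; case: (ord2_cases j) => ->.
Qed.

End Matrix2.

Section HermitianMatrices.
Variable R : realType.
Local Notation C := R[i].
Local Notation Re := (@complex.Re R).
Local Notation Im := (@complex.Im R).
Local Open Scope complex_scope.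

Lemma complex_ext (x y : C) : Re x = Re y -> Im x = Im y -> x = y.
Proof. by case: x => ? ?; case: y => ? ? /= -> ->. Qed.

Lemma conjc_realM (x : R) (y : C) : (x%:C * y)^*%C = x%:C * y^*%C.
Proof. by case: y => y1 y2; apply: complex_ext; rewrite /= ?mul0r ?subr0 ?addr0 ?mulrN. Qed.

Lemma Re_sum (I : Type) (s : seq I) (P : pred I) (F : I -> C) :
  Re (\sum_(i <- s | P i) F i) = \sum_(i <- s | P i) Re (F i).
Proof. by elim/big_rec2: _ => // i y1 y2 _ <-; case: (F i); case: y2. Qed.

Lemma adjmx_mx2 (a b c d : C) : adjmx (mx2 a b c d) = mx2 a^* c^* b^* d^*.
Proof.
by apply/matrixP => i j; rewrite !mxE; case: (ord2_cases i) => ->; case: (ord2_cases j) => ->.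
Qed.

Definition herm2 (a d b1 b2 : R) : 'M[C]_2 := mx2 a%:C (b1 +i* b2) (b1 -i* b2) d%:C.

Lemma herm2D a d b1 b2 a' d' b1' b2' :
  herm2 a d b1 b2 + herm2 a' d' b1' b2' = herm2 (a + a') (d + d') (b1 + b1') (b2 + b2').
Proof. by rewrite /herm2 mx2D; congr mx2; apply: complex_ext => /=; ring. Qed.

Lemma herm2Z (x a d b1 b2 : R) :
  x%:C *: herm2 a d b1 b2 = herm2 (x * a) (x * d) (x * b1) (x * b2).
Proof. by rewrite /herm2 mx2Z; congr mx2; apply: complex_ext => /=; ring. Qed.

Lemma herm2N a d b1 b2 : - herm2 a d b1 b2 = herm2 (- a) (- d) (- b1) (- b2).
Proof. by rewrite /herm2 -scaleN1r mx2Z; congr mx2; apply: complex_ext => /=; ring. Qed.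

Lemma herm2_inj a d b1 b2 a' d' b1' b2' : herm2 a d b1 b2 = herm2 a' d' b1' b2' ->
  [/\ a = a', d = d', b1 = b1' & b2 = b2'].
Proof. by case/mx2_inj => [[->] [-> ->] _ [->]]. Qed.

Lemma herm2_1 : 1%:M = herm2 1 1 0 0.
Proof.
apply/matrixP => i j; rewrite !mxE.
by case: (ord2_cases i) => ->; case: (ord2_cases j) => ->; apply: complex_ext; rewrite /= ?oppr0.
Qed.

Lemma mxtrace_herm2 a d b1 b2 : \tr (herm2 a d b1 b2) = (a + d)%:C.
Proof. by rewrite /mxtrace big_ord2 /herm2 !mxE /= rmorphD. Qed.

Lemma hermitian_herm2 (E : 'M[C]_2) : adjmx E = E ->
  E = herm2 (Re (E 0 0)) (Re (E 1 1)) (Re (E 0 1)) (Im (E 0 1)).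
Proof.
move=> hE.
have /mx2_inj [h00 _ h10 h11] :
    mx2 (E 0 0)^* (E 1 0)^* (E 0 1)^* (E 1 1)^* = mx2 (E 0 0) (E 0 1) (E 1 0) (E 1 1).
  by rewrite -adjmx_mx2 -!mx2_eta.
rewrite {1}[E]mx2_eta /herm2 -h10.
congr mx2; try by case: (E 0 1).
- by move: h00; case: (E 0 0) => a b /(congr1 Im) /= ?; apply: complex_ext => //=; lra.
- by move: h11; case: (E 1 1) => a b /(congr1 Im) /= ?; apply: complex_ext => //=; lra.
Qed.

Lemma herm2_idem (a d b1 b2 : R) : herm2 a d b1 b2 *m herm2 a d b1 b2 = herm2 a d b1 b2 ->
  [/\ a ^+ 2 + b1 ^+ 2 + b2 ^+ 2 = a, (a + d) * b1 = b1, (a + d) * b2 = b2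
    & d ^+ 2 + b1 ^+ 2 + b2 ^+ 2 = d].
Proof.
rewrite /herm2 mx2_mul => /mx2_inj [/(congr1 Re) /= h1 /(congr1 Re) /= h2
  /(congr1 Im) /= h3 /(congr1 Re) /= h4]; split; nra.
Qed.

End HermitianMatrices.

Section PositiveMatrices.
Variable R : realType.
Local Notation C := R[i].
Local Notation Re := (@complex.Re R).
Local Open Scope complex_scope.

Lemma psd_scale n (x : R) (A : 'M[C]_n) : 0 <= x -> psd A -> psd (x%:C *: A).
Proof.
move=> hx hA v; rewrite -scalemxAr -scalemxAl mxE.
by apply: mulr_ge0; [rewrite ler0c | exact: hA].
Qed.

Lemma psd_diag n (A : 'M[C]_n) i : psd A -> 0 <= A i i.
Proof.
move=> /(_ (delta_mx i 0)).
suff -> : adjmx (delta_mx i 0 : 'cV[C]_n) = delta_mx 0 i by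
  rewrite -rowE -colE !mxE.
by apply/matrixP => j k; rewrite !mxE conjc_nat andbC.
Qed.

Lemma psd_trace_ge0 n (A : 'M[C]_n) : psd A -> 0 <= \tr A.
Proof. by move=> hA; apply: sumr_ge0 => i _; exact: psd_diag. Qed.

Lemma psd_trace_real n (A : 'M[C]_n) : psd A -> \tr A = (Re (\tr A))%:C /\ 0 <= Re (\tr A).
Proof.
move=> /psd_trace_ge0; rewrite lecE /= => /andP [/eqP im0 re_ge0]; split => //.
by apply: complex_ext.
Qed.

Lemma quad_form2 (A : 'M[C]_2) (v : 'cV[C]_2) : (adjmx v *m A *m v) 0 0 =
  (v 0 0)^*%C * (A 0 0 * v 0 0 + A 0 1 * v 1 0) + (v 1 0)^*%C * (A 1 0 * v 0 0 + A 1 1 * v 1 0).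
Proof. by rewrite !mxE big_ord2 !mxE !big_ord2 !mxE /=; ring. Qed.

Lemma psd_form (A : 'M[C]_2) x y : psd A ->
  0 <= x^*%C * (A 0 0 * x + A 0 1 * y) + y^*%C * (A 1 0 * x + A 1 1 * y).
Proof. by move=> /(_ (\col_i if i == 0 then x else y)); rewrite quad_form2 !mxE. Qed.

Lemma psd_trace0 (A : 'M[C]_2) : psd A -> \tr A = 0 -> A = 0.
Proof.
move=> hA; rewrite /mxtrace big_ord2.
have g0 := psd_diag 0 hA; have g1 := psd_diag 1 hA.
move=> /eqP; rewrite paddr_eq0 // => /andP [/eqP a00 /eqP a11].
have off t : A 0 1 * t + t^*%C * A 1 0 = 0.
  apply/le_anti/andP; split.
    move: (psd_form 1 (- t) hA); rewrite a00 a11 conjc1 rmorphN.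
    by rewrite [X in 0 <= X -> _](_ : _ = - (A 0 1 * t + t^*%C * A 1 0)) ?oppr_ge0 //; ring.
  move: (psd_form 1 t hA); rewrite a00 a11 conjc1.
  by rewrite [X in 0 <= X -> _](_ : _ = A 0 1 * t + t^*%C * A 1 0) //; ring.
have e1 := off 1; rewrite conjc1 mulr1 mul1r in e1.
have e2 : A 0 1 - A 1 0 = 0.
  have nzi : ('i%C : C) != 0 by rewrite eq_complex /= oner_eq0 andbF.
  apply: (mulfI nzi); rewrite mulr0 -(off 'i%C).
  have -> : 'i^*%C = - 'i%C :> C by apply: complex_ext; rewrite /= ?oppr0.
  ring.
have : A 0 1 *+ 2 = (A 0 1 + A 1 0) + (A 0 1 - A 1 0) by ring.
rewrite e1 e2 addr0 => /eqP; rewrite mulrn_eq0 /= => /eqP a01.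
move: e1; rewrite a01 add0r => a10.
by apply/matrixP => i j; case: (ord2_cases i) => ->; case: (ord2_cases j) => ->; rewrite mxE.
Qed.

Lemma psd_herm2 (a d b1 b2 : R) :
  0 <= a -> 0 <= d -> b1 ^+ 2 + b2 ^+ 2 <= a * d -> psd (herm2 a d b1 b2).
Proof.
move=> ha hd hb v; rewrite quad_form2 !mxE /=.
case: (v 0 0) => x1 x2; case: (v 1 0) => y1 y2.
rewrite lecE /=; apply/andP; split; first by apply/eqP; ring.
have s1 := sqr_ge0 (a * x1 + b1 * y1 - b2 * y2).
have s2 := sqr_ge0 (a * x2 + b1 * y2 + b2 * y1).
have [a0|a_neq0] := eqVneq a 0.
  subst a; rewrite mul0r in hb.
  have [-> ->] : b1 = 0 /\ b2 = 0 by split; nra.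
  nra.
nra.
Qed.

End PositiveMatrices.

Section WernerSteering.
Variable R : realType.
Local Notation C := R[i].
Local Open Scope complex_scope.

Definition eps2 (a b : 'I_2) : C := (a == 0)%:R * (b == 1)%:R - (a == 1)%:R * (b == 0)%:R.

Lemma conjc_eps2 a b : (eps2 a b)^*%C = eps2 a b.
Proof. by rewrite /eps2 rmorphB !rmorphM !rmorph_nat. Qed.

Lemma psi_minusE a b z :
  psi_minus R (mxtens_index (a, b)) z = ((Num.sqrt 2)^-1)%:C * eps2 a b.
Proof.
have -> : z = mxtens_index (0 : 'I_1, 0 : 'I_1) by apply/val_inj; case: z => [[]].
rewrite /psi_minus !mxE !mxtens_indexK /eps2.
by case: (ord2_cases a) => ->; case: (ord2_cases b) => ->; rewrite /=; simpc.
Qed.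

Lemma werner_entry r a b c d :
  werner r (mxtens_index (a, b)) (mxtens_index (c, d)) =
  (r / 2)%:C * (eps2 a b * eps2 c d) + ((1 - r) / 4)%:C * ((a == c) && (b == d))%:R.
Proof.
rewrite /werner /adjmx; move: (psi_minus R) (@psi_minusE) => psi psiE.
rewrite !mxE big_ord1 !mxE !psiE conjc_realM conjc_eps2.
rewrite (inj_eq (can_inj (@mxtens_indexK 2 2))) xpair_eqE.
have s2 : ((Num.sqrt 2)^-1)%:C * ((Num.sqrt 2)^-1)%:C = (2^-1)%:C :> C.
  by rewrite -rmorphM -invfM -expr2 sqr_sqrtr ?ler0n.
have r2 : r%:C * (2^-1)%:C = (r / 2)%:C :> C by rewrite -rmorphM.
rewrite -r2 -s2; ring.
Qed.

Definition steer (rho : 'M[C]_(2 * 2)) (E : 'M[C]_2) : 'M[C]_2 :=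
  ptraceA ((E *t 1%:M) *m rho).

Lemma steer_werner r E :
  steer (werner r) E = (((1 + r) / 4)%:C * \tr E)%:M - (r / 2)%:C *: E.
Proof.
apply/matrixP => i j; rewrite /steer /ptraceA !mxE.
under eq_bigr do rewrite mxE sum_mxtens_index.
under eq_bigr do under eq_bigr do under eq_bigr do rewrite tensmxE werner_entry mxE.
rewrite /mxtrace !big_ord2 /eps2.
have e : ((1 + r) / 4)%:C = (r / 2)%:C + ((1 - r) / 4)%:C :> C.
  by rewrite -rmorphD; congr _%:C; field.
case: (ord2_cases i) => ->; case: (ord2_cases j) => ->;
  rewrite /= e; ring.
Qed.

End WernerSteering.

Section BlochForm.
Variable R : realType.
Local Notation C := R[i].
Local Open Scope complex_scope.

Lemma ndotsigma_herm2 (n : 'rV[R]_3) :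
  ndotsigma n = herm2 (n 0 2) (- n 0 2) (n 0 0) (- n 0 1).
Proof.
apply/matrixP => i j; rewrite /ndotsigma !mxE.
by case: (ord2_cases i) => ->; case: (ord2_cases j) => -> /=; apply: complex_ext => /=; ring.
Qed.

Lemma bloch_herm2 (e c : R) (n : 'rV[R]_3) :
  e%:C *: 1%:M + c%:C *: ndotsigma n =
  herm2 (e + c * n 0 2) (e - c * n 0 2) (c * n 0 0) (- (c * n 0 1)).
Proof. by rewrite ndotsigma_herm2 herm2_1 !herm2Z herm2D; congr herm2; ring. Qed.

Lemma unit_vec_norm (v : unit_vec R) : val v 0 0 ^+ 2 + val v 0 1 ^+ 2 + val v 0 2 ^+ 2 = 1.
Proof. by have /eqP := valP v; rewrite big_ord3. Qed.

Definition unit_vec_of (x y z : R) (h : x ^+ 2 + y ^+ 2 + z ^+ 2 = 1) : unit_vec R.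
Proof.
exists (\row_j (if j == 0 then x else if j == 1 then y else z)).
by rewrite big_ord3 !mxE /= h.
Defined.

Lemma unit_vec_ofE x y z h :
  [/\ val (@unit_vec_of x y z h) 0 0 = x, val (unit_vec_of h) 0 1 = y
    & val (unit_vec_of h) 0 2 = z].
Proof. by rewrite /= !mxE. Qed.

Lemma unit_vec_inhabited : inhabited (unit_vec R).
Proof. by constructor; apply: (@unit_vec_of 0 0 1); rewrite expr0n expr1n !add0r. Qed.

Lemma bloch_eq1 (e c : R) (v : unit_vec R) :
  e%:C *: 1%:M + c%:C *: ndotsigma (val v) = 1%:M -> e = 1 /\ c = 0.
Proof.
rewrite bloch_herm2 herm2_1 => /herm2_inj [h1 h2 h3 h4].
have := unit_vec_norm v; split; nra.
Qed.

Lemma psd_bloch (e c : R) (v : unit_vec R) :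
  `|c| <= e -> psd (e%:C *: 1%:M + c%:C *: ndotsigma (val v)).
Proof.
have := unit_vec_norm v; rewrite bloch_herm2.
set n0 := val v 0 0; set n1 := val v 0 1; set n2 := val v 0 2 => norm c_le_e.
have n2_le1 : `|n2| <= 1 by rewrite -(expr_le1 (n := 2)) // real_normK ?num_real //; nra.
have : `|c * n2| <= e by rewrite normrM; have := normr_ge0 c; have := normr_ge0 n2; nra.
rewrite ler_norml => /andP [cn2_lo cn2_hi].
have c2 : c ^+ 2 <= e ^+ 2 by move: c_le_e; rewrite ler_norml => /andP [? ?]; nra.
apply: psd_herm2; [lra | lra | ].
have -> : (c * n0) ^+ 2 + (- (c * n1)) ^+ 2 = c ^+ 2 * (1 - n2 ^+ 2) by rewrite -norm; ring.
nra.
Qed.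

Lemma Pr_familyE (r : R) (v : unit_vec R) a :
  @Pr_family R r v a = (2^-1)%:C *: 1%:M + ((if a == ord0 then r else - r) / 2)%:C *: ndotsigma (val v).
Proof.
rewrite /Pr_family bloch_herm2 ndotsigma_herm2 herm2_1.
have -> : (2%:R^-1 : C) = (2^-1)%:C by rewrite rmorphV ?unitfE ?pnatr_eq0 //= rmorph_nat.
have -> : (if a == ord0 then 1 else -1) = (if a == ord0 then 1 else -1 : R)%:C :> C.
  by case: ifP; rewrite ?rmorphN rmorph1.
by rewrite !herm2Z herm2D herm2Z; congr herm2; case: ifP => _; ring.
Qed.

Lemma sum_Pr_family (r : R) (v : unit_vec R) : \sum_b @Pr_family R r v b = 1%:M.
Proof. by rewrite big_ord2 !Pr_familyE /= !bloch_herm2 herm2D herm2_1; congr herm2; field. Qed.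

Lemma Pr_family_povm (r : R) (v : unit_vec R) : 0 <= r <= 1 -> is_povm (@Pr_family R r v).
Proof.
move=> /andP [r_ge0 r_le1]; split => [a|]; last exact: sum_Pr_family.
rewrite Pr_familyE; apply: psd_bloch.
by case: ifP => _; rewrite ?mulNr ?normrN ger0_norm ?divr_ge0 //; lra.
Qed.

Lemma steer_werner_bloch (r e c : R) (v : unit_vec R) :
  steer (werner r) (e%:C *: 1%:M + c%:C *: ndotsigma (val v)) =
  ((e - c) / 2)%:C *: 1%:M + c%:C *: @Pr_family R r v 1.
Proof.
rewrite steer_werner Pr_familyE /= !bloch_herm2 mxtrace_herm2 -scalemx1 herm2_1.
by rewrite -scaleNr -rmorphN -rmorphM !herm2Z !herm2D; congr herm2; field.
Qed.

Lemma steer_werner_sharp (r : R) (v : unit_vec R) b :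
  steer (werner r) (@Pr_family R 1 v b) = (2^-1)%:C *: @Pr_family R r v (rev_ord b).
Proof.
rewrite Pr_familyE steer_werner_bloch.
have [-> | ->] := ord2_cases b;
  [have -> : rev_ord (0 : 'I_2) = 1 by apply/val_inj
  | have -> : rev_ord (1 : 'I_2) = 0 by apply/val_inj];
  by rewrite /= !Pr_familyE /= !bloch_herm2 herm2_1 !herm2Z !herm2D; congr herm2; field.
Qed.

End BlochForm.

Section ProjectiveMeasurements.
Variable R : realType.
Local Notation C := R[i].
Local Notation Re := (@complex.Re R).
Local Notation Im := (@complex.Im R).
Local Open Scope complex_scope.

Lemma projector_bloch (E : 'M[C]_2) : adjmx E = E -> E *m E = E ->
  (exists2 e : R, 0 <= e & E = e%:C *: 1%:M) \/
  exists2 n : unit_vec R, \tr E = 1 &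
    E = (2^-1)%:C *: 1%:M + (2^-1)%:C *: ndotsigma (val n).
Proof.
move=> /hermitian_herm2 ->; set a := Re _; set d := Re _; set b1 := Re _; set b2 := Im _.
clearbody a d b1 b2.
move=> /herm2_idem [ha hb1 hb2 hd].
have [scalar | ] := boolP [&& b1 == 0, b2 == 0 & a == d].
  move: scalar => /and3P [/eqP b10 /eqP b20 /eqP ad]; left; exists a; first nra.
  by rewrite herm2_1 herm2Z b10 b20 ad !mulr0 mulr1.
move=> not_scalar; right.
have tr1 : a + d = 1.
  have [b10 | b1_neq0] := eqVneq b1 0; last by apply: (mulIf b1_neq0); rewrite hb1 mul1r.
  have [b20 | b2_neq0] := eqVneq b2 0; last by apply: (mulIf b2_neq0); rewrite hb2 mul1r.
  move: not_scalar; rewrite b10 b20 !eqxx /= -subr_eq0 => ad_neq0.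
  apply/eqP; rewrite -subr_eq0; apply/eqP/(mulfI ad_neq0).
  by rewrite mulr0; move: ha hd; rewrite b10 b20; nra.
have hn : (2 * b1) ^+ 2 + (- (2 * b2)) ^+ 2 + (a - d) ^+ 2 = 1.
  have -> : d = 1 - a by lra.
  nra.
exists (unit_vec_of hn); first by rewrite mxtrace_herm2 tr1.
rewrite bloch_herm2; have [-> -> ->] := unit_vec_ofE hn.
by congr herm2; lra.
Qed.

Lemma povm_complement k (M : 'I_k -> 'M[C]_2) (a0 a : 'I_k) : is_povm M -> a != a0 ->
  \tr (M a0) = 1 -> \tr (M a) = 1 -> M a = 1%:M - M a0.
Proof.
move=> [psdM sumM] a_neq tr0 tr1.
have others0 : \sum_(b | (b != a0) && (b != a)) \tr (M b) = 0.
  have : \sum_b \tr (M b) = 1 + (1 + 0) by rewrite -raddf_sum /= sumM mxtrace_scalar addr0.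
  by rewrite (bigD1 a0) //= (bigD1 a) //= tr0 tr1 => /addrI/addrI.
have rest0 b : b != a0 -> b != a -> M b = 0.
  move=> ? ?; apply: psd_trace0 (psdM b) _.
  by apply: (psumr_eq0P _ others0) => [c _|]; [exact: psd_trace_ge0 | apply/andP].
move: sumM; rewrite (bigD1 a0) //= (bigD1 a) //= big1 => [|b /andP [] /rest0]; last by [].
by move=> <-; rewrite addr0 addrAC subrr add0r.
Qed.

Definition bloch_aligned (n : 'rV[R]_3) (E : 'M[C]_2) : Prop :=
  exists e c : R, E = e%:C *: 1%:M + c%:C *: ndotsigma n /\ `|c| <= e.

Lemma projective_aligned k (M : 'I_k -> 'M[C]_2) : is_projective M ->
  exists v : unit_vec R, forall a, bloch_aligned (val v) (M a).
Proof.
move=> [povmM projM].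
have scalar_aligned n E e : 0 <= e -> E = e%:C *: 1%:M -> bloch_aligned n E.
  by move=> e_ge0 ->; exists e, 0; rewrite scale0r addr0 normr0.
have half_ge0 : 0 <= 2^-1 :> R by rewrite invr_ge0 ler0n.
have [[a0 [n tr0 E0]] | none] := pselect (exists a0, exists2 n : unit_vec R,
  \tr (M a0) = 1 & M a0 = (2^-1)%:C *: 1%:M + (2^-1)%:C *: ndotsigma (val n)).
  exists n => a.
  case: (projector_bloch (projM a).1 (projM a).2) => [[e e_ge0 Ea] | [n' tra Ea]].
    exact: scalar_aligned Ea.
  have [-> | a_neq] := eqVneq a a0.
    by exists (2^-1), (2^-1); split; [exact: E0 | rewrite ger0_norm].
  exists (2^-1), (- 2^-1); split; last by rewrite normrN ger0_norm.
  rewrite (povm_complement povmM a_neq tr0 tra) E0 !bloch_herm2 herm2_1 herm2N herm2D.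
  by congr herm2; lra.
have [v0] := unit_vec_inhabited R; exists v0 => a.
case: (projector_bloch (projM a).1 (projM a).2) => [[e e_ge0 Ea] | [n' tra Ea]].
  exact: scalar_aligned Ea.
by case: none; exists a, n'.
Qed.

End ProjectiveMeasurements.

Section LHSModels.
Variable R : realType.
Local Notation C := R[i].
Local Notation Re := (@complex.Re R).
Local Open Scope complex_scope.

Lemma povm_normalize n (Pi : 'I_n -> 'M[C]_2) : is_povm Pi ->
  exists (p : 'I_n -> R) (rho : 'I_n -> 'M[C]_2),
    [/\ forall i, 0 <= p i, \sum_i p i = 1, forall i, is_state (rho i)
      & forall i, Pi i = (2 * p i)%:C *: rho i].
Proof.
move=> [psdPi sumPi].
pose p i := Re (\tr (Pi i)) / 2.
have trPi i : \tr (Pi i) = (2 * p i)%:C.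
  by rewrite (psd_trace_real (psdPi i)).1 /p mulrC divfK ?pnatr_eq0.
have p_ge0 i : 0 <= p i by have := (psd_trace_real (psdPi i)).2; rewrite /p; lra.
(* A vanishing element gets an arbitrary state. *)
exists p, (fun i => if p i == 0 then herm2 1 0 0 0 else ((2 * p i)^-1)%:C *: Pi i).
split => //.
- have : \sum_i \tr (Pi i) = 1 *+ 2 by rewrite -raddf_sum /= sumPi mxtrace_scalar.
  move=> /(congr1 Re); rewrite Re_sum /p -mulr_suml => ->.
  by rewrite /=; lra.
- move=> i; case: eqP => [_ | p_neq0].
    split; first by apply: psd_herm2; rewrite ?ler01 ?lexx // expr0n addr0 mulr0.
    by rewrite mxtrace_herm2 addr0.
  have p2_neq0 : 2 * p i != 0 by rewrite mulf_neq0 ?pnatr_eq0 //; apply/eqP.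
  split; first by apply: psd_scale; rewrite // invr_ge0 mulr_ge0 ?ler0n.
  by rewrite mxtraceZ trPi -rmorphM mulVf.
- move=> i; case: eqP => [p0 | p_neq0].
    have -> : Pi i = 0 by apply: psd_trace0 (psdPi i) _; rewrite trPi p0 mulr0.
    by rewrite p0 mulr0 scale0r.
  have p2_neq0 : 2 * p i != 0 by rewrite mulf_neq0 ?pnatr_eq0 //; apply/eqP.
  by rewrite scalerA -rmorphM mulfV // scale1r.
Qed.

Lemma aligned_povm_coeffs k (M : 'I_k -> 'M[C]_2) (v : unit_vec R) :
  is_povm M -> (forall a, bloch_aligned (val v) (M a)) ->
  exists e c : 'I_k -> R,
    [/\ forall a, M a = (e a)%:C *: 1%:M + (c a)%:C *: ndotsigma (val v),
        forall a, `|c a| <= e a, \sum_a e a = 1 & \sum_a c a = 0].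
Proof.
move=> [_ sumM] /choice [e /choice [c hec]].
have sum1 : (\sum_a e a)%:C *: 1%:M + (\sum_a c a)%:C *: ndotsigma (val v) = 1%:M.
  rewrite -[in RHS]sumM !rmorph_sum !scaler_suml -big_split /=.
  by apply: eq_bigr => a _; case: (hec a) => -> _.
have [e1 c0] := bloch_eq1 sum1.
by exists e, c; split => [a | a | |]; [case: (hec a) | case: (hec a) | exact: e1 | exact: c0].
Qed.

Lemma aligned_steer_response (r : R) n (Pi : 'I_n -> 'M[C]_2) (v : unit_vec R)
    (pv w : 'I_n -> R) (rho : 'I_n -> 'M[C]_2) k (M : 'I_k -> 'M[C]_2) :
  \sum_i Pi i = 1%:M -> (forall i, 0 <= pv i <= 1) ->
  @Pr_family R r v 1 = \sum_i (pv i)%:C *: Pi i ->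
  (forall i, Pi i = (2 * w i)%:C *: rho i) ->
  is_povm M -> (forall a, bloch_aligned (val v) (M a)) ->
  exists q : 'I_k -> 'I_n -> R,
    [/\ forall a i, 0 <= q a i, forall i, \sum_a q a i = 1
      & forall a, steer (werner r) (M a) = \sum_i (q a i * w i)%:C *: rho i].
Proof.
move=> sumPi pv_bounds simPr Pi_rho povmM alignedM.
have [e [c [Me c_le_e sum_e sum_c]]] := aligned_povm_coeffs povmM alignedM.
exists (fun a i => e a - c a + 2 * c a * pv i); split.
- (* q a i = (e a - c a) (1 - pv i) + (e a + c a) pv i *)
  move=> a i; have := c_le_e a; rewrite ler_norml => /andP [h1 h2].
  have /andP [h3 h4] := pv_bounds i; nra.
- move=> i; rewrite big_split big_split /= sumrN -mulr_suml -mulr_sumr sum_e sum_c; ring.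
- move=> a; rewrite Me steer_werner_bloch simPr -sumPi !scaler_sumr -big_split /=.
  apply: eq_bigr => i _; rewrite Pi_rho !scalerA -!rmorphM -scalerDl -rmorphD.
  by congr (_%:C *: _); field.
Qed.

Lemma simulable_projective_LHS (r : R) n (X : Type) (k : X -> nat) (M : povm_family R k) :
  simulable r n -> (forall x, is_projective (M x)) ->
  has_LHS_model (assemblage (werner r) M) n.
Proof.
move=> [Pi [povmPi [p [p_ge0 [p_sum simPi]]]]] projM.
have [w [rho [w_ge0 w_sum rho_state Pi_rho]]] := povm_normalize povmPi.
have pv_bounds v i : 0 <= p v 1 i <= 1.
  have := p_sum v i; rewrite big_ord2 => sum1.
  by apply/andP; split; [exact: p_ge0 | have := p_ge0 v 0 i; lra].
have /dep_choice [q hq] x : exists q : 'I_(k x) -> 'I_n -> R,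
    [/\ forall a i, 0 <= q a i, forall i, \sum_a q a i = 1
      & forall a, steer (werner r) (M x a) = \sum_i (q a i * w i)%:C *: rho i].
  have [v alignedM] := projective_aligned (projM x).
  exact: aligned_steer_response povmPi.2 (pv_bounds v) (simPi v 1) Pi_rho (projM x).1 alignedM.
exists w, rho, q; do 5?split => //.
- by move=> x; case: (hq x).
- by move=> x; case: (hq x).
- by move=> x a; case: (hq x) => _ _ steerE; exact: steerE.
Qed.

Lemma all_LHS_simulable (r : R) m : all_LHS (werner r) m -> simulable r m.
Proof.
have r01 : 0 <= (1 : R) <= 1 by rewrite ler01 lexx.
move=> /(_ _ _ (@Pr_family R 1) (fun v => Pr_family_povm v r01)).
case=> w [rho [q [w_ge0 [_ [rho_state [q_ge0 [q_sum sigmaE]]]]]]].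
have sigma_sharp v b :
    (2^-1)%:C *: @Pr_family R r v (rev_ord b) = \sum_i (q v b i * w i)%:C *: rho i.
  by rewrite -steer_werner_sharp; exact: sigmaE.
have two_half : 2%:C * (2^-1)%:C = 1 :> C by rewrite -rmorphM mulfV ?pnatr_eq0.
have [v0] := unit_vec_inhabited R.
have half : \sum_i (w i)%:C *: rho i = (2^-1)%:C *: 1%:M.
  apply/esym; rewrite -(sum_Pr_family r v0) scaler_sumr (reindex_inj rev_ord_inj) /=.
  under eq_bigr do rewrite sigma_sharp.
  rewrite exchange_big /=.
  by apply: eq_bigr => i _; rewrite -scaler_suml -rmorph_sum -mulr_suml q_sum mul1r.
exists (fun i => (2 * w i)%:C *: rho i); split.
  split => [i|]; first by apply: psd_scale; [have := w_ge0 i; lra | case: (rho_state i)].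
  rewrite (eq_bigr (fun i => 2%:C *: ((w i)%:C *: rho i))) => [|i _]; last first.
    by rewrite scalerA -rmorphM.
  by rewrite -scaler_sumr half scalerA two_half scale1r.
exists (fun v a i => q v (rev_ord a) i); split => [v a i|]; first exact: q_ge0.
split => [v i | v a]; first by rewrite -(q_sum v i) [RHS](reindex_inj rev_ord_inj).
rewrite -[LHS]scale1r -two_half -scalerA -[a]rev_ordK sigma_sharp rev_ordK scaler_sumr.
by apply: eq_bigr => i _; rewrite !scalerA -!rmorphM; congr (_%:C *: _); ring.
Qed.

End LHSModels.

Lemma min_opt_some (P : nat -> Prop) n : min_opt P = Some n -> P n.
Proof. by rewrite /min_opt; case: pselect => // h [<-]; case: ex_minnP => m /asboolP. Qed.

Lemma ole_min_opt (P Q : nat -> Prop) :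
  (forall n, Q n -> P n) -> ole (min_opt P) (min_opt Q).
Proof.
move=> QP; rewrite /ole; case hQ: (min_opt Q) => [m|]; last by case: (min_opt P).
have Pm := QP _ (min_opt_some hQ).
rewrite /min_opt; case: pselect => [hP | nP]; last by case: nP; exists m; apply/asboolP.
by case: ex_minnP => n _; apply; apply/asboolP.
Qed.

Theorem proposition1 (R : realType) (r : R) :
  0 <= r <= 2^-1 ->
  (forall n : nat, Nr r = Some n ->
     forall (X : Type) (k : X -> nat) (M : povm_family R k),
       (forall x, is_projective (M x)) ->
       has_LHS_model (assemblage (werner r) M) n)
  /\ ole (Nr r) (gamma (werner r)).
Proof.
move=> _; split.
- by move=> n /min_opt_some sim X k M; exact: simulable_projective_LHS.
- by apply: ole_min_opt => m; exact: all_LHS_simulable.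
Qed.
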